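(* Let $D$ be a finite set, $k\ge2$, and let $P:D^k\to\{0,1\}$ be a $k$-ary predicate which contains a singleton $\ell$-cube for some $2\le\ell\le k$. Then there exist a weighted directed $k$-uniform hypergraph $H=(V,E,w)$ with $|V|=n$ such that for every $0<\varepsilon<1$ and every $\varepsilon$-$P$-sparsifier $H_\varepsilon=(V,E_\varepsilon,w_\varepsilon)$ of $H$ we have $|E_\varepsilon|=\Omega(n^\ell)$; that is, there is a constant $c>0$ such that for infinitely many $n$ there is such an $H$ on $n$ vertices with $|E_\varepsilon|\ge cn^\ell$ for all such $\varepsilon$ and $H_\varepsilon$.
   Context: $P$ contains a singleton $\ell$-cube if there exist two-element subsets $D_j=\{d^j_0,d^j_1\}\subseteq D$ for $j=1,\dots,\ell$, indices $n_1,\dots,n_\ell\in\{0,1\}$ and a permutation $\sigma$ of the $k$ coordinates such that (i) there exist $x_{\ell+1},\dots,x_k\in D$ with $P(\sigma(d^1_{n_1},\dots,d^\ell_{n_\ell},x_{\ell+1},\dots,x_k))=1$, and (ii) for all $y_{\ell+1},\dots,y_k\in D$ and all $i_1,\dots,i_\ell\in\{0,1\}$, $P(\sigma(d^1_{i_1},\dots,d^\ell_{i_\ell},y_{\ell+1},\dots,y_k))=1$ implies $i_j=n_j$ for all $j=1,\dots,\ell$. Here $\sigma(\cdot)$ permutes the entries of the tuple. A weighted directed $k$-uniform hypergraph $H=(V,E,w)$ has $E$ a set of ordered $k$-tuples of distinct vertices and $w:E\to\mathbb{R}_{>0}$. For $A:V\to D$, $\mathrm{Val}_{H,P}(A)=\sum_{e\in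 E}w(e)P(A(e))$ with $A$ applied entrywise. An $\varepsilon$-$P$-sparsifier of $H$ is $H_\varepsilon=(V,E_\varepsilon,w_\varepsilon)$ with $E_\varepsilon\subseteq E$, $w_\varepsilon:E_\varepsilon\to\mathbb{R}_{>0}$, such that for every $A:V\to D$, $(1-\varepsilon)\mathrm{Val}_{H,P}(A)\le\mathrm{Val}_{H_\varepsilon,P}(A)\le(1+\varepsilon)\mathrm{Val}_{H,P}(A)$. *)

From HB Require Import structures.
From mathcomp Require Import all_boot all_order all_algebra all_fingroup.
From mathcomp Require Import reals.
Set Implicit Arguments. Unset Strict Implicit. Unset Printing Implicit Defensive.
Import Order.TTheory GRing.Theory Num.Theory.
Local Open Scope ring_scope.

Definition perm_tuple (D : Type) (k : nat) (s : 'S_k) (a : k.-tuple D)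
  : k.-tuple D := [tuple tnth a (s i) | i < k].

(* The tuple (d^1_{i_1}, ..., d^l_{i_l}, y_{l+1}, ..., y_k): coordinates j < l
   are taken from the two-element set D_{j} = {d0 j, d1 j} according to the
   bit sel j (false = index 0, true = index 1); coordinates j >= l from y. *)
Definition cube_tuple (D : Type) (k l : nat) (d0 d1 : 'I_k -> D)
  (sel : 'I_k -> bool) (y : 'I_k -> D) : k.-tuple D :=
  [tuple if (i < l)%N then (if sel i then d1 i else d0 i) else y i | i < k].

Definition singleton_cube (D : finType) (k : nat) (P : k.-tuple D -> bool)
  (l : nat) : Prop :=
  exists (d0 d1 : 'I_k -> D) (nsel : 'I_k -> bool) (s : 'S_k),
    (forall j : 'I_k, (j < l)%N -> d0 j != d1 j) /\
    (exists x : 'I_k -> D, P (perm_tuple s (cube_tuple l d0 d1 nsel x))) /\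
    (forall (y : 'I_k -> D) (sel : 'I_k -> bool),
        P (perm_tuple s (cube_tuple l d0 d1 sel y)) ->
        forall j : 'I_k, (j < l)%N -> sel j = nsel j).

Definition is_wdhypergraph (R : realType) (n k : nat)
  (E : {set k.-tuple 'I_n}) (w : k.-tuple 'I_n -> R) : Prop :=
  (forall e, e \in E -> uniq e) /\ (forall e, e \in E -> 0 < w e).

Definition Val (R : realType) (D : finType) (n k : nat) (P : k.-tuple D -> bool)
  (E : {set k.-tuple 'I_n}) (w : k.-tuple 'I_n -> R) (A : 'I_n -> D) : R :=
  \sum_(e in E) w e * (P (map_tuple A e))%:R.

Definition is_sparsifier (R : realType) (D : finType) (n k : nat)
  (P : k.-tuple D -> bool) (eps : R)
  (E : {set k.-tuple 'I_n}) (w : k.-tuple 'I_n -> R)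
  (E' : {set k.-tuple 'I_n}) (w' : k.-tuple 'I_n -> R) : Prop :=
  E' \subset E /\ (forall e, e \in E' -> 0 < w' e) /\
  forall A : 'I_n -> D,
    (1 - eps) * Val P E w A <= Val P E' w' A /\
    Val P E' w' A <= (1 + eps) * Val P E w A.

(** Split the vertices into [k] blocks of [m + 1] vertices.  For each choice
   [f] of a vertex in each of the first [l] blocks, take the edge through the
   chosen vertices (and the first vertex of every later block), permuted by
   the permutation of the cube.  Assigning [d^j_{n_j}] to the chosen vertex of
   block [j < l], the other element of [D_j] to the rest of that block, and
   [x_j] to block [j >= l], coordinate [j < l] of the edge of [g] reads
   [d^j_{n_j}] iff [g j = f j]; so by the singleton property the edge of [f]
   is the only satisfied one.  A sparsifier with [eps < 1] must keep some
   satisfied edge, hence all [(m + 1)^l = (n / k)^l] edges. *)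
From HB Require Import structures.
From mathcomp Require Import all_boot all_order all_algebra all_fingroup.
From mathcomp Require Import reals.
From mathcomp Require Import zify.
Import Order.TTheory GRing.Theory Num.Theory.
Local Open Scope ring_scope.
Set Implicit Arguments. Unset Strict Implicit.

Section Sparsifiers.

Variables (R : realType) (D : finType) (n k : nat) (P : k.-tuple D -> bool).
Implicit Types (E : {set k.-tuple 'I_n}) (w : k.-tuple 'I_n -> R).

Lemma Val_eq0 E w (A : 'I_n -> D) :
  (forall e, e \in E -> ~~ P (map_tuple A e)) -> Val P E w A = 0.
Proof. by move=> unsat; rewrite /Val big1 // => e /unsat/negbTE->; rewrite mulr0. Qed.

Lemma Val_gt0 E w (A : 'I_n -> D) e :
  (forall e, e \in E -> 0 < w e) -> e \in E -> P (map_tuple A e) ->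
  0 < Val P E w A.
Proof.
move=> w_gt0 eE Pe; rewrite /Val (bigD1 e) //= Pe mulr1.
apply: ltr_pwDl (w_gt0 e eE) _.
by apply: sumr_ge0 => e' /andP[e'E _]; rewrite mulr_ge0 ?ler0n // ltW ?w_gt0.
Qed.

Lemma sparsifier_keeps_satisfied_edge (eps : R) E w E' w' (A : 'I_n -> D) e :
  eps < 1 -> (forall e, e \in E -> 0 < w e) -> is_sparsifier P eps E w E' w' ->
  e \in E -> P (map_tuple A e) -> exists2 e', e' \in E' & P (map_tuple A e').
Proof.
move=> eps_lt1 w_gt0 [_ [_ approx]] eE Pe.
have [/exists_inP // | /exists_inPn unsat] := boolP [exists e' in E', P (map_tuple A e')].
have [lower _] := approx A; rewrite (Val_eq0 w' unsat) in lower.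
have := Val_gt0 w_gt0 eE Pe; rewrite ltNge.
by rewrite -(pmulr_rle0 _ (_ : 0 < 1 - eps)) ?lower // subr_gt0.
Qed.

Lemma sparsifier_keeps_isolated_edge (eps : R) E w E' w' (A : 'I_n -> D) e :
  eps < 1 -> (forall e, e \in E -> 0 < w e) -> is_sparsifier P eps E w E' w' ->
  e \in E -> (forall e', e' \in E -> P (map_tuple A e') = (e' == e)) ->
  e \in E'.
Proof.
move=> eps_lt1 w_gt0 sparse eE isolated.
have [E'_sub _] := sparse.
have Pe : P (map_tuple A e) by rewrite isolated ?eqxx.
have [e' e'E' Pe'] := sparsifier_keeps_satisfied_edge eps_lt1 w_gt0 sparse eE Pe.
by move: Pe'; rewrite isolated => [/eqP <- // |]; apply: (subsetP E'_sub).
Qed.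

End Sparsifiers.

Lemma map_perm_tuple (T U : Type) k (A : T -> U) (s : 'S_k) (t : k.-tuple T) :
  map_tuple A (perm_tuple s t) = perm_tuple s (map_tuple A t).
Proof. by apply: eq_from_tnth => i; rewrite tnth_map !tnth_mktuple tnth_map. Qed.

Lemma perm_tuple_inj (T : Type) k (s : 'S_k) : injective (@perm_tuple T k s).
Proof.
move=> t t' eq_st; apply: eq_from_tnth => i.
by have := congr1 (fun u => tnth u (s^-1 i)%g) eq_st; rewrite !tnth_mktuple permKV.
Qed.

Lemma perm_tuple_uniq (T : eqType) k (s : 'S_k) (t : k.-tuple T) :
  uniq (perm_tuple s t) = uniq t.
Proof.
apply/tuple_uniqP/tuple_uniqP => [inj_st i j eq_ij | inj_t i j].
  by apply: (perm_inj (s := s^-1)); apply: inj_st; rewrite !tnth_mktuple !permKV.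
by rewrite !tnth_mktuple => /inj_t/perm_inj.
Qed.

Section CubeHypergraph.

Variables (k l m : nat) (s : 'S_k).
Hypothesis l_le_k : (l <= k)%N.

Local Notation vertex := ('I_k * 'I_m.+1)%type.
Local Notation n := #|{: vertex}|.

Definition cube_label (f : {ffun 'I_l -> 'I_m.+1}) (i : 'I_k) : 'I_m.+1 :=
  if (insub (val i) : option 'I_l) is Some j then f j else ord0.

Lemma cube_label_widen f (j : 'I_l) : cube_label f (widen_ord l_le_k j) = f j.
Proof. by rewrite /cube_label /= valK. Qed.

Definition cube_edge (f : {ffun 'I_l -> 'I_m.+1}) : k.-tuple 'I_n :=
  perm_tuple s [tuple enum_rank (i, cube_label f i) | i < k].

Definition cube_hypergraph : {set k.-tuple 'I_n} :=
  [set cube_edge f | f : {ffun 'I_l -> 'I_m.+1}].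

Lemma cube_edge_uniq f : uniq (cube_edge f).
Proof.
rewrite perm_tuple_uniq; apply/tuple_uniqP => i j; rewrite !tnth_mktuple.
by move/enum_rank_inj => [].
Qed.

Lemma cube_edge_inj : injective cube_edge.
Proof.
move=> f g /perm_tuple_inj eq_fg; apply/ffunP => j.
have := congr1 (fun u => tnth u (widen_ord l_le_k j)) eq_fg.
by rewrite !tnth_mktuple !cube_label_widen => /enum_rank_inj [].
Qed.

Lemma cube_hypergraph_wd (R : realType) :
  is_wdhypergraph cube_hypergraph (fun=> 1 : R).
Proof. by split=> // _ /imsetP[f _ ->]; apply: cube_edge_uniq. Qed.

Lemma card_cube_hypergraph : #|cube_hypergraph| = (m.+1 ^ l)%N.
Proof. by rewrite card_imset ?card_ffun ?card_ord //; apply: cube_edge_inj. Qed.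

Variables (D : finType) (P : k.-tuple D -> bool).
Variables (d0 d1 : 'I_k -> D) (nsel : 'I_k -> bool) (x : 'I_k -> D).
Hypothesis P_cube : forall (y : 'I_k -> D) (sel : 'I_k -> bool),
  P (perm_tuple s (cube_tuple l d0 d1 sel y)) ->
  forall j : 'I_k, (j < l)%N -> sel j = nsel j.
Hypothesis P_corner : P (perm_tuple s (cube_tuple l d0 d1 nsel x)).

Definition cube_assignment (f : {ffun 'I_l -> 'I_m.+1}) (v : 'I_n) : D :=
  let: (i, a) := enum_val v in
  if (i < l)%N then
    if (if a == cube_label f i then nsel i else ~~ nsel i) then d1 i else d0 i
  else x i.

Lemma cube_assignment_edge f g :
  map_tuple (cube_assignment f) (cube_edge g) =
  perm_tuple s (cube_tuple l d0 d1
    (fun i => if cube_label g i == cube_label f i then nsel i else ~~ nsel i) x).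
Proof.
rewrite map_perm_tuple; congr perm_tuple; apply: eq_from_tnth => i.
by rewrite tnth_map !tnth_mktuple /cube_assignment enum_rankK.
Qed.

Lemma cube_assignment_isolates f g :
  P (map_tuple (cube_assignment f) (cube_edge g)) = (g == f).
Proof.
rewrite cube_assignment_edge; apply/idP/eqP => [Pg | ->]; last first.
  rewrite (_ : cube_tuple _ _ _ _ _ = cube_tuple l d0 d1 nsel x) //.
  by apply: eq_from_tnth => i; rewrite !tnth_mktuple eqxx.
apply/ffunP => j; have := P_cube Pg (j := widen_ord l_le_k j) (ltn_ord j).
by rewrite /= !cube_label_widen; case: eqP => // _; case: (nsel _).
Qed.

Lemma cube_assignment_isolates_in f e :
  e \in cube_hypergraph ->
  P (map_tuple (cube_assignment f) e) = (e == cube_edge f).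
Proof.
by case/imsetP=> g _ ->; rewrite cube_assignment_isolates (inj_eq cube_edge_inj).
Qed.

End CubeHypergraph.

Theorem proposition15 (R : realType) (D : finType) (k : nat)
  (P : k.-tuple D -> bool) (l : nat) :
  (2 <= k)%N -> (2 <= l)%N -> (l <= k)%N -> singleton_cube P l ->
  exists c : R, 0 < c /\
    forall N : nat, exists n : nat, (N <= n)%N /\
      exists (E : {set k.-tuple 'I_n}) (w : k.-tuple 'I_n -> R),
        is_wdhypergraph E w /\
        forall eps : R, 0 < eps -> eps < 1 ->
        forall (E' : {set k.-tuple 'I_n}) (w' : k.-tuple 'I_n -> R),
          is_sparsifier P eps E w E' w' ->
          c * (n%:R ^+ l) <= (#|E'|)%:R.
Proof.
move=> k_ge2 _ l_le_k [d0 [d1 [nsel [s [_ [[x P_corner] P_cube]]]]]].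
have k_gt0 : (0 < k)%N by apply: leq_trans k_ge2.
exists (k%:R ^+ l)^-1; split; first by rewrite invr_gt0 exprn_gt0 ?ltr0n.
move=> N; exists #|{: 'I_k * 'I_N.+1}|; split; first by rewrite card_prod !card_ord; nia.
exists (cube_hypergraph l N s), (fun=> 1); split; first exact: cube_hypergraph_wd.
move=> eps _ eps_lt1 E' w' sparse.
have E_sub : cube_hypergraph l N s \subset E'.
  apply/subsetP => _ /imsetP[f _ ->].
  apply: (sparsifier_keeps_isolated_edge (A := cube_assignment d0 d1 nsel x f)
    eps_lt1 _ sparse) => [e _||]; rewrite ?ltr01 ?imset_f //.
  by move=> e; apply: cube_assignment_isolates_in.
have -> : (k%:R ^+ l)^-1 * #|{: 'I_k * 'I_N.+1}|%:R ^+ l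
           = #|cube_hypergraph l N s|%:R :> R.
  rewrite card_cube_hypergraph // card_prod !card_ord natrX natrM exprMn mulKf //.
  by rewrite expf_neq0 // pnatr_eq0 -lt0n.
by rewrite ler_nat subset_leq_card.
Qed.
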